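(* For $\tau=u+iv$ in the upper half-plane $\mathbb{H}$, with $q=e^{2\pi i\tau}$, define \[ H(q):=\sum_{n\ge 0}(-1)^nq^{3n^2+2n}\left(1+q^{2n+1}\right)\sum_{|j|\le n}(-1)^{j}q^{-j^2}, \] \[ H^{-}(\tau):=-\frac{1}{\sqrt{\pi}}\sum_{\varepsilon\in\{0,1\}}(-1)^{\varepsilon}\sum_{n,r\in \mathbb{Z}}\operatorname{sgn}\!\left(2r+\varepsilon+\tfrac 13\right)\Gamma\!\left(\tfrac 12,6\pi\left(2r+\varepsilon+\tfrac 13\right)^2v\right)q^{-\frac 32\left(2r+\varepsilon+\frac 13\right)^2+\frac 12\left(2n+\varepsilon+1\right)^2}, \] and $\widehat{H}(\tau):=q^{\frac13}H(q)+H^{-}(\tau)$. Let $Q(\mathbf{n}):=3n_1^2-n_2^2$ for $\mathbf{n}=(n_1,n_2)^T\in\mathbb{R}^2$, with associated bilinear form $B(\mathbf{x},\mathbf{y}):=Q(\mathbf{x}+\mathbf{y})-Q(\mathbf{x})-Q(\mathbf{y})=6x_1y_1-2x_2y_2$, and let $\mathbf{c_1}:=(1,3)^T$, $\mathbf{c_2}:=(-1,3)^T$, $\mathbf{a}:=(\frac13,0)^T$, $\mathbf{b}:=(\frac1{12},-\frac14)^T$. Define \[ \vartheta_{\mathbf{a},\mathbf{b}}(\tau):=\sum_{\mathbf{n}\in\mathbb{Z}^2+\mathbf{a}}\left(E\!\left(\frac{B(\mathbf{c_1},\mathbf{n})\sqrt v}{\sqrt{-Q(\mathbf{c_1})}}\right)-E\!\left(\frac{B(\mathbf{c_2},\mathbf{n})\sqrt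 v}{\sqrt{-Q(\mathbf{c_2})}}\right)\right)e^{2\pi i B(\mathbf{b},\mathbf{n})}q^{Q(\mathbf{n})}, \] where $E(w):=2\int_0^w e^{-\pi t^2}\,dt$. Then \[ \widehat{H}(\tau)=\frac{e^{-\frac{\pi i}{3}}}{2}\vartheta_{\mathbf{a},\mathbf{b}}(\tau). \]
   Context: For real $\alpha$, $q^{\alpha}:=e^{2\pi i\alpha\tau}$. $\Gamma(a,x):=\int_x^\infty e^{-t}t^{a-1}\,dt$ is the incomplete gamma function. $\operatorname{sgn}(x)=x/|x|$ for $x\ne0$ and $\operatorname{sgn}(0)=0$. Note $Q(\mathbf{c_1})=Q(\mathbf{c_2})=-6$. *)

From Stdlib Require Import Reals ZArith.
From Coquelicot Require Import Coquelicot.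
Open Scope R_scope.

Definition cexp (z : C) : C :=
  (exp (Re z) * cos (Im z), exp (Re z) * sin (Im z)).

Definition qpow (tau : C) (alpha : R) : C :=
  cexp (Cmult (RtoC (2 * PI * alpha)) (Cmult Ci tau)).

Definition sgn (x : R) : R :=
  if Rlt_dec 0 x then 1 else if Rlt_dec x 0 then -1 else 0.

Definition inc_gamma (a x : R) : R :=
  real (Lim (fun b => RInt (fun t => exp (- t) * Rpower t (a - 1)) x b) p_infty).

Definition Efun (w : R) : R := 2 * RInt (fun t => exp (- PI * t ^ 2)) 0 w.

Definition Qf (x : R * R) : R := 3 * (fst x) ^ 2 - (snd x) ^ 2.
Definition Bf (x y : R * R) : R :=
  Qf (fst x + fst y, snd x + snd y) - Qf x - Qf y.
Definition c1 : R * R := (1, 3).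
Definition c2 : R * R := (-1, 3).
Definition avec : R * R := (1/3, 0).
Definition bvec : R * R := (1/12, -1/4).

Definition sum_upto (f : nat -> C) (N : nat) : C := sum_n f N.
Definition has_sum_nat (f : nat -> C) (s : C) : Prop :=
  filterlim (sum_upto f) eventually (locally s).

(* sum over Z^2 as the limit of the square partial sums over
   [-N,N]^2 (all series below are absolutely convergent) *)
Definition zshift (N k : nat) : Z := (Z.of_nat k - Z.of_nat N)%Z.
Definition sq_sum (f : Z -> Z -> C) (N : nat) : C :=
  sum_n (fun i => sum_n (fun j => f (zshift N i) (zshift N j)) (2 * N)) (2 * N).
Definition has_sum_Z2 (f : Z -> Z -> C) (s : C) : Prop :=
  filterlim (sq_sum f) eventually (locally s).

Definition H_term (tau : C) (n : nat) : C :=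
  let nr := INR n in
  Cmult (RtoC ((-1) ^ n))
   (Cmult (qpow tau (3 * nr ^ 2 + 2 * nr))
    (Cmult (Cplus 1 (qpow tau (2 * nr + 1)))
      (sum_n (fun k => let j := IZR (zshift n k) in
                Cmult (RtoC ((-1) ^ k * (-1) ^ n)) (qpow tau (- j ^ 2))) (2 * n)))).
(* note: (-1)^j = (-1)^(k-n) = (-1)^k (-1)^n *)

Definition Hminus_term (tau : C) (eps : R) (n r : Z) : C :=
  let m := 2 * IZR r + eps + 1/3 in
  Cmult (RtoC (sgn m * inc_gamma (1/2) (6 * PI * m ^ 2 * Im tau)))
        (qpow tau (- 3/2 * m ^ 2 + 1/2 * (2 * IZR n + eps + 1) ^ 2)).

Definition theta_term (tau : C) (m1 m2 : Z) : C :=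
  let nv := (IZR m1 + fst avec, IZR m2 + snd avec) in
  let v := Im tau in
  Cmult (RtoC (Efun (Bf c1 nv * sqrt v / sqrt (- Qf c1))
               - Efun (Bf c2 nv * sqrt v / sqrt (- Qf c2))))
   (Cmult (cexp (Cmult Ci (RtoC (2 * PI * Bf bvec nv)))) (qpow tau (Qf nv))).

From Pilot Require Import Defs.
From Stdlib Require Import Reals ZArith Lia Lra List Permutation.
From Coquelicot Require Import Coquelicot.
Open Scope R_scope.

(** For [w <> 0], [E(w) = sgn w * (1 - Gamma(1/2, PI w^2) / sqrt PI)]; this follows from the
    Gaussian integral [int_0^oo exp (- PI t^2) dt = 1/2].  Writing the lattice point as
    [n = (m1 + 1/3, m2)], one has [B(c1, n) = 6 (m1 + 1/3 - m2)] and [B(c2, n) = - 6 (m1 + 1/3 + m2)],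
    so every theta term splits into a sign part and two incomplete gamma parts.

    The sign factor [sgn (m1 + 1/3 - m2) + sgn (m1 + 1/3 + m2)] is [2] on [|m2| <= m1], [-2] on
    [m1 < - |m2|] and [0] elsewhere; summing the rows [m1 = n] and [m1 = - n - 1] together gives
    the [n]-th term of [H], so the sign parts add up to [2 e^(PI i/3) q^(1/3) H(q)].  Split according
    to the parity of [m1 - m2], the first gamma part is carried onto the two [eps]-sums of [H^-] by
    the unimodular substitution [(n, r) |-> (n - r, n - 3 r - eps)]; the second one is the first
    one reflected by [m2 |-> - m2].  Everything converges absolutely with geometric bounds, which
    justifies the rearrangements; they are done with unordered sums over [Z * Z]. *)

(** * The Gaussian integral and the functions [Efun] and [inc_gamma (1/2)] *)

(* Instances at [R] of generic Coquelicot lemmas, whose normed-module argument is not inferred. *)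
Lemma continuous_of_ex_derive (f : R -> R) x : ex_derive f x -> continuous f x.
Proof. apply (@ex_derive_continuous R_AbsRing R_NormedModule). Qed.

Lemma ex_RInt_of_continuous (f : R -> R) a b :
  (forall z, Rmin a b <= z <= Rmax a b -> continuous f z) -> ex_RInt f a b.
Proof. apply (@ex_RInt_continuous R_CompleteNormedModule). Qed.

Lemma RInt_scal_R (f : R -> R) a b l :
  ex_RInt f a b -> RInt (fun x => l * f x) a b = l * RInt f a b.
Proof. apply (@RInt_scal R_CompleteNormedModule). Qed.

Lemma RInt_comp_lin_R (f : R -> R) u v a b :
  ex_RInt f (u * a + v) (u * b + v) ->
  RInt (fun y => u * f (u * y + v)) a b = RInt f (u * a + v) (u * b + v).
Proof. apply (@RInt_comp_lin R_CompleteNormedModule). Qed.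

Lemma RInt_ext_R (f g : R -> R) a b :
  (forall x, Rmin a b < x < Rmax a b -> f x = g x) -> RInt f a b = RInt g a b.
Proof. apply (@RInt_ext R_CompleteNormedModule). Qed.

Lemma RInt_Chasles_R (f : R -> R) a b c :
  ex_RInt f a b -> ex_RInt f b c -> RInt f a b + RInt f b c = RInt f a c.
Proof. apply (@RInt_Chasles R_CompleteNormedModule). Qed.

Lemma RInt_comp_R (f g dg : R -> R) a b :
  (forall x, Rmin a b <= x <= Rmax a b -> continuous f (g x)) ->
  (forall x, Rmin a b <= x <= Rmax a b -> is_derive g x (dg x) /\ continuous dg x) ->
  RInt (fun y => dg y * f (g y)) a b = RInt f (g a) (g b).
Proof. apply (@RInt_comp R_CompleteNormedModule). Qed.

Lemma exp_le_exp_of_le a b : a <= b -> exp a <= exp b.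
Proof. intros [H | ->]; [apply Rlt_le, exp_increasing | ]; lra. Qed.

Lemma one_plus_sq_pos t : 0 < 1 + t ^ 2.
Proof. nra. Qed.

Definition gauss_int (x : R) : R := RInt (fun t => exp (- t ^ 2)) 0 x.

(* [gauss_int x ^ 2 + gauss_aux x] has derivative 0 and value [PI/4] at 0, while
   [gauss_aux] vanishes at infinity: this evaluates the Gaussian integral. *)
Definition gauss_aux (x : R) : R :=
  RInt (fun t => exp (- x ^ 2 * (1 + t ^ 2)) / (1 + t ^ 2)) 0 1.

Lemma ex_RInt_gauss a b : ex_RInt (fun t => exp (- t ^ 2)) a b.
Proof.
  apply ex_RInt_of_continuous; intros z _.
  apply continuous_of_ex_derive; auto_derive; auto.
Qed.

Lemma is_derive_gauss_int x : is_derive gauss_int x (exp (- x ^ 2)).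
Proof.
  apply (is_derive_RInt (fun t => exp (- t ^ 2)) gauss_int 0 x).
  - apply filter_forall; intro b. apply (@RInt_correct R_CompleteNormedModule), ex_RInt_gauss.
  - apply continuous_of_ex_derive; auto_derive; auto.
Qed.

Lemma is_derive_gauss_aux x :
  is_derive gauss_aux x (RInt (fun t => - 2 * x * exp (- x ^ 2 * (1 + t ^ 2))) 0 1).
Proof.
  assert (Hd : forall y t, is_derive (fun z => exp (- z ^ 2 * (1 + t ^ 2)) / (1 + t ^ 2)) y
                            (- 2 * y * exp (- y ^ 2 * (1 + t ^ 2)))).
  { intros y t. pose proof (one_plus_sq_pos t). auto_derive; simpl in *; [lra | field; lra]. }
  rewrite (RInt_ext_R _ (fun t => Derive (fun z => exp (- z ^ 2 * (1 + t ^ 2)) / (1 + t ^ 2)) x)).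
  2: { intros t _. symmetry. apply is_derive_unique, Hd. }
  apply is_derive_RInt_param.
  - apply filter_forall; intros y t _. eexists; apply Hd.
  - intros t _.
    apply continuity_2d_pt_ext with (f := fun u v => - 2 * u * exp (- u ^ 2 * (1 + v ^ 2))).
    { intros u v. symmetry. apply is_derive_unique, Hd. }
    apply continuity_2d_pt_mult.
    + apply continuity_2d_pt_mult; [apply continuity_2d_pt_const | apply continuity_2d_pt_id1].
    + apply continuity_1d_2d_pt_comp with (f := exp) (g := fun u v => - u ^ 2 * (1 + v ^ 2)).
      * apply derivable_continuous_pt, derivable_pt_exp.
      * simpl. repeat first [ apply continuity_2d_pt_mult | apply continuity_2d_pt_plus
                            | apply continuity_2d_pt_opp | apply continuity_2d_pt_id1
                            | apply continuity_2d_pt_id2 | apply continuity_2d_pt_const ].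
  - apply filter_forall; intros y. apply ex_RInt_of_continuous; intros z _.
    pose proof (one_plus_sq_pos z). apply continuous_of_ex_derive; auto_derive; lra.
Qed.

Lemma gauss_aux_derive_eq x :
  RInt (fun t => - 2 * x * exp (- x ^ 2 * (1 + t ^ 2))) 0 1 = - 2 * exp (- x ^ 2) * gauss_int x.
Proof.
  rewrite (RInt_ext_R _ (fun t => (- 2 * exp (- x ^ 2)) * (x * exp (- (x * t + 0) ^ 2)))).
  2: { intros t _. replace (- x ^ 2 * (1 + t ^ 2)) with (- x ^ 2 + - (x * t + 0) ^ 2) by ring.
       rewrite exp_plus. ring. }
  rewrite RInt_scal_R, (RInt_comp_lin_R (fun s => exp (- s ^ 2))) by
    (try apply ex_RInt_gauss; apply ex_RInt_of_continuous; intros z _;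
     apply continuous_of_ex_derive; auto_derive; auto).
  unfold gauss_int. do 3 f_equal; ring.
Qed.

Lemma gauss_int_sq_add_gauss_aux x : gauss_int x ^ 2 + gauss_aux x = PI / 4.
Proof.
  set (h := fun x => gauss_int x ^ 2 + gauss_aux x).
  assert (Hd : forall y, is_derive h y 0).
  { intros y. evar (d : R). replace 0 with d.
    - apply (@is_derive_plus R_AbsRing R_NormedModule).
      + apply (is_derive_pow gauss_int 2 y _ (is_derive_gauss_int y)).
      + apply is_derive_gauss_aux.
    - unfold d. rewrite gauss_aux_derive_eq. unfold plus; simpl. ring. }
  assert (Hconst : h x = h 0).
  { pose proof (is_RInt_derive h (fun _ => 0) 0 x (fun y _ => Hd y)
                  (fun y _ => continuous_const 0 y)) as HI.
    apply is_RInt_unique in HI. rewrite RInt_const in HI.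
    unfold scal, minus, plus, opp in HI; simpl in HI; unfold mult in HI; simpl in HI. lra. }
  change (h x = PI / 4). rewrite Hconst. unfold h, gauss_int, gauss_aux.
  rewrite RInt_point.
  rewrite (RInt_ext_R _ (fun t => / (1 + t²))).
  2: { intros t _. replace (- 0 ^ 2 * (1 + t ^ 2)) with 0 by ring.
       rewrite exp_0. unfold Rsqr. field. pose proof (one_plus_sq_pos t). simpl in *. lra. }
  rewrite (@is_RInt_unique R_CompleteNormedModule _ _ _ (atan 1 - atan 0)).
  - rewrite atan_1, atan_0. unfold zero; simpl. ring.
  - apply (is_RInt_derive atan). { intros y _. apply is_derive_atan. }
    intros z _. apply continuous_of_ex_derive. auto_derive. unfold Rsqr; nra.
Qed.

Lemma gauss_aux_bounds x : 0 <= gauss_aux x <= exp (- x ^ 2).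
Proof.
  assert (Hex : ex_RInt (fun t => exp (- x ^ 2 * (1 + t ^ 2)) / (1 + t ^ 2)) 0 1).
  { apply ex_RInt_of_continuous; intros z _. pose proof (one_plus_sq_pos z).
    apply continuous_of_ex_derive; auto_derive; lra. }
  split.
  - apply RInt_ge_0; [lra | exact Hex |]. intros t _.
    pose proof (one_plus_sq_pos t). apply Rle_mult_inv_pos; [apply Rlt_le, exp_pos | lra].
  - replace (exp (- x ^ 2)) with (RInt (fun _ => exp (- x ^ 2)) 0 1)
      by (rewrite RInt_const; unfold scal; simpl; unfold mult; simpl; ring).
    apply RInt_le; [lra | exact Hex | apply ex_RInt_const |]. intros t _.
    pose proof (one_plus_sq_pos t).
    assert (exp (- x ^ 2 * (1 + t ^ 2)) <= exp (- x ^ 2)) by (apply exp_le_exp_of_le; nra).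
    assert (/ (1 + t ^ 2) <= 1) by (rewrite <- Rinv_1; apply Rinv_le_contravar; nra).
    pose proof (exp_pos (- x ^ 2 * (1 + t ^ 2))). unfold Rdiv. nra.
Qed.

Lemma is_lim_exp_neg_sq : is_lim (fun x => exp (- x ^ 2)) p_infty 0.
Proof.
  apply (is_lim_comp exp (fun x => - x ^ 2) p_infty 0 m_infty).
  - apply is_lim_exp_m.
  - apply (is_lim_ext (fun x => - (x * x))); [intros; ring |].
    apply (is_lim_opp _ p_infty p_infty).
    apply (is_lim_mult (fun x => x) (fun x => x) p_infty p_infty p_infty);
      try apply is_lim_id. simpl. auto.
  - exists 0. intros; discriminate.
Qed.

Lemma is_lim_gauss_int : is_lim gauss_int p_infty (sqrt PI / 2).
Proof.
  apply (is_lim_ext_loc (fun x => sqrt (PI / 4 - gauss_aux x))).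
  - exists 0. intros x Hx. rewrite <- (gauss_int_sq_add_gauss_aux x).
    replace (gauss_int x ^ 2 + gauss_aux x - gauss_aux x) with (gauss_int x ^ 2) by ring.
    apply sqrt_pow2, RInt_ge_0; [lra | apply ex_RInt_gauss |].
    intros; apply Rlt_le, exp_pos.
  - replace (sqrt PI / 2) with (sqrt (PI / 4 - 0)).
    + apply (is_lim_comp_continuous (fun x => PI / 4 - gauss_aux x) sqrt p_infty).
      * apply (is_lim_minus (fun _ => PI / 4) gauss_aux p_infty (PI / 4) 0);
          [apply is_lim_const | | reflexivity].
        apply (is_lim_le_le_loc (fun _ => 0) (fun x => exp (- x ^ 2)));
          [exists 0; intros; apply gauss_aux_bounds | apply is_lim_const | apply is_lim_exp_neg_sq].
      * apply continuous_sqrt.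
    + rewrite Rminus_0_r, sqrt_div_alt by lra.
      replace 4 with (2 * 2) by ring. rewrite sqrt_square; lra.
Qed.

Definition gauss_pi_int (b : R) : R := RInt (fun t => exp (- PI * t ^ 2)) 0 b.

Lemma sqrt_PI_pos : 0 < sqrt PI.
Proof. apply sqrt_lt_R0, PI_RGT_0. Qed.

Lemma ex_RInt_gauss_pi a b : ex_RInt (fun t => exp (- PI * t ^ 2)) a b.
Proof.
  apply ex_RInt_of_continuous; intros z _.
  apply continuous_of_ex_derive; auto_derive; auto.
Qed.

Lemma gauss_pi_int_scale b : gauss_pi_int b = / sqrt PI * gauss_int (sqrt PI * b).
Proof.
  pose proof sqrt_PI_pos. pose proof PI_RGT_0.
  unfold gauss_pi_int, gauss_int.
  rewrite (RInt_ext_R _ (fun t => / sqrt PI * (sqrt PI * exp (- (sqrt PI * t + 0) ^ 2)))).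
  2: { intros t _. field_simplify; [| lra]. do 2 f_equal.
       replace ((sqrt PI * t + 0) ^ 2) with ((sqrt PI * sqrt PI) * t ^ 2) by ring.
       rewrite sqrt_sqrt; lra. }
  rewrite RInt_scal_R, (RInt_comp_lin_R (fun s => exp (- s ^ 2))) by
    (try apply ex_RInt_gauss; apply ex_RInt_of_continuous; intros z _;
     apply continuous_of_ex_derive; auto_derive; auto).
  do 2 f_equal; ring.
Qed.

Lemma is_lim_scal_pos_p_infty a : 0 < a -> is_lim (fun b => a * b) p_infty p_infty.
Proof.
  intros Ha P [M HM]. exists (M / a). intros x Hx. apply HM.
  apply (Rmult_lt_compat_l a) in Hx; [| lra]. field_simplify in Hx; lra.
Qed.

Lemma is_lim_gauss_pi_int : is_lim gauss_pi_int p_infty (1 / 2).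
Proof.
  pose proof sqrt_PI_pos.
  apply (is_lim_ext (fun b => / sqrt PI * gauss_int (sqrt PI * b))).
  { intros; symmetry; apply gauss_pi_int_scale. }
  replace (1 / 2) with (/ sqrt PI * (sqrt PI / 2)) by (field; lra).
  apply (is_lim_scal_l (fun b => gauss_int (sqrt PI * b)) (/ sqrt PI) p_infty (sqrt PI / 2)).
  apply (is_lim_comp gauss_int (fun b => sqrt PI * b) p_infty (sqrt PI / 2) p_infty).
  - apply is_lim_gauss_int.
  - apply is_lim_scal_pos_p_infty; assumption.
  - exists 0. intros; discriminate.
Qed.

Lemma gauss_pi_int_opp a : gauss_pi_int (- a) = - gauss_pi_int a.
Proof.
  unfold gauss_pi_int.
  pose proof (RInt_comp_lin_R (fun t => exp (- PI * t ^ 2)) (-1) 0 0 a (ex_RInt_gauss_pi _ _)) as H.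
  replace (-1 * 0 + 0) with 0 in H by ring. replace (-1 * a + 0) with (- a) in H by ring.
  rewrite <- H, (RInt_ext_R _ (fun y => -1 * exp (- PI * y ^ 2))).
  - rewrite RInt_scal_R by apply ex_RInt_gauss_pi. ring.
  - intros y _. do 3 f_equal. ring.
Qed.

Lemma gauss_pi_int_sub a b : gauss_pi_int b - gauss_pi_int a = RInt (fun t => exp (- PI * t ^ 2)) a b.
Proof.
  unfold gauss_pi_int. rewrite <- (RInt_Chasles_R _ 0 a b) by apply ex_RInt_gauss_pi. ring.
Qed.

Lemma gauss_pi_int_le a b : a <= b -> gauss_pi_int a <= gauss_pi_int b.
Proof.
  intros Hab. cut (0 <= gauss_pi_int b - gauss_pi_int a); [lra |].
  rewrite gauss_pi_int_sub. apply RInt_ge_0; [exact Hab | apply ex_RInt_gauss_pi |].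
  intros; apply Rlt_le, exp_pos.
Qed.

Lemma gauss_pi_int_le_half c : gauss_pi_int c <= 1 / 2.
Proof.
  refine (is_lim_le_loc (fun _ => gauss_pi_int c) gauss_pi_int p_infty (gauss_pi_int c) (1 / 2) _ _ _);
    [| apply is_lim_const | apply is_lim_gauss_pi_int].
  exists c. intros; apply gauss_pi_int_le; lra.
Qed.

(* On [[a, b]] use [exp (- PI * t ^ 2) <= exp (- PI * a ^ 2) * exp (- PI * (t - a) ^ 2)]. *)
Lemma gauss_pi_int_sub_le a b : 0 <= a -> a <= b ->
  gauss_pi_int b - gauss_pi_int a <= exp (- PI * a ^ 2) / 2.
Proof.
  intros Ha Hab. pose proof PI_RGT_0.
  set (g := fun s => exp (- PI * a ^ 2) * (1 * exp (- PI * (1 * s + - a) ^ 2))).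
  rewrite gauss_pi_int_sub. apply Rle_trans with (RInt g a b).
  - apply RInt_le; [exact Hab | apply ex_RInt_gauss_pi | |].
    + apply ex_RInt_of_continuous; intros z _.
      apply continuous_of_ex_derive; unfold g; auto_derive; auto.
    + intros s Hs. unfold g. rewrite Rmult_1_l, <- exp_plus. apply exp_le_exp_of_le.
      assert (0 <= PI * (a * (s - a))) by (apply Rmult_le_pos; nra). nra.
  - unfold g. rewrite RInt_scal_R, (RInt_comp_lin_R (fun t => exp (- PI * t ^ 2))).
    + replace (1 * a + - a) with 0 by ring. fold (gauss_pi_int (1 * b + - a)).
      pose proof (gauss_pi_int_le_half (1 * b + - a)). pose proof (exp_pos (- PI * a ^ 2)). nra.
    + apply ex_RInt_gauss_pi.
    + apply ex_RInt_of_continuous; intros z _. apply continuous_of_ex_derive; auto_derive; auto.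
Qed.

Lemma half_sub_gauss_pi_int_le a : 0 <= a -> 1 / 2 - gauss_pi_int a <= exp (- PI * a ^ 2) / 2.
Proof.
  intros Ha.
  refine (is_lim_le_loc (fun b => gauss_pi_int b - gauss_pi_int a) (fun _ => exp (- PI * a ^ 2) / 2)
            p_infty (1 / 2 - gauss_pi_int a) (exp (- PI * a ^ 2) / 2) _ _ _).
  - exists a. intros b Hb. apply gauss_pi_int_sub_le; lra.
  - apply (is_lim_minus gauss_pi_int (fun _ => gauss_pi_int a) p_infty (1 / 2) (gauss_pi_int a));
      [apply is_lim_gauss_pi_int | apply is_lim_const | reflexivity].
  - apply is_lim_const.
Qed.

(* The substitution [t = PI * s ^ 2] turns [exp (- t) * t ^ (-1/2) dt] into [2 * sqrt PI * exp (- PI * s ^ 2) ds]. *)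
Lemma RInt_gamma_half y b : 0 < y -> y <= b ->
  RInt (fun t => exp (- t) * Rpower t (1 / 2 - 1)) y b
  = 2 * sqrt PI * (gauss_pi_int (sqrt (b / PI)) - gauss_pi_int (sqrt (y / PI))).
Proof.
  intros Hy Hb. pose proof PI_RGT_0. pose proof sqrt_PI_pos.
  set (s0 := sqrt (y / PI)). set (s1 := sqrt (b / PI)).
  assert (Hs0 : 0 < s0) by (apply sqrt_lt_R0, Rdiv_lt_0_compat; lra).
  assert (Hs01 : s0 <= s1).
  { apply sqrt_le_1_alt. apply Rmult_le_compat_r; [apply Rlt_le, Rinv_0_lt_compat |]; lra. }
  assert (Hsq : forall z, 0 <= z -> PI * (sqrt (z / PI)) ^ 2 = z).
  { intros z Hz. rewrite <- Rsqr_pow2, Rsqr_sqrt; [field; lra | apply Rdiv_le_0_compat; lra]. }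
  rewrite <- (Hsq y) at 1 by lra. rewrite <- (Hsq b) at 1 by lra. fold s0 s1.
  rewrite <- (RInt_comp_R (fun t => exp (- t) * Rpower t (1 / 2 - 1)) (fun s => PI * s ^ 2) (fun s => 2 * PI * s)).
  - rewrite (RInt_ext_R _ (fun s => 2 * sqrt PI * exp (- PI * s ^ 2))).
    + rewrite RInt_scal_R, gauss_pi_int_sub by apply ex_RInt_gauss_pi. reflexivity.
    + intros s Hs. rewrite Rmin_left, Rmax_right in Hs by lra.
      replace (1 / 2 - 1) with (- / 2) by field.
      rewrite Rpower_Ropp, Rpower_sqrt by (apply Rmult_lt_0_compat; [lra | apply pow_lt; lra]).
      replace (- (PI * s ^ 2)) with (- PI * s ^ 2) by ring.
      rewrite sqrt_mult_alt, sqrt_pow2 by lra.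
      rewrite <- (sqrt_sqrt PI) at 1 by lra. field. lra.
  - intros x Hx. rewrite Rmin_left, Rmax_right in Hx by lra.
    apply continuous_of_ex_derive. unfold Rpower. auto_derive. apply Rmult_lt_0_compat; [lra | apply pow_lt; lra].
  - intros x _. split.
    + auto_derive; auto. ring.
    + apply continuous_of_ex_derive; auto_derive; auto.
Qed.

Lemma inc_gamma_half_eq y : 0 < y -> inc_gamma (1 / 2) y = 2 * sqrt PI * (1 / 2 - gauss_pi_int (sqrt (y / PI))).
Proof.
  intros Hy. pose proof PI_RGT_0.
  unfold inc_gamma.
  assert (Hlim : is_lim (fun b => RInt (fun t => exp (- t) * Rpower t (1 / 2 - 1)) y b) p_infty
                   (2 * sqrt PI * (1 / 2 - gauss_pi_int (sqrt (y / PI))))).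
  2: { rewrite (is_lim_unique _ _ _ Hlim). reflexivity. }
  apply (is_lim_ext_loc (fun b => 2 * sqrt PI * (gauss_pi_int (sqrt (b / PI)) - gauss_pi_int (sqrt (y / PI))))).
  { exists y. intros b Hb. symmetry. apply RInt_gamma_half; lra. }
  apply (is_lim_scal_l _ (2 * sqrt PI) p_infty (1 / 2 - gauss_pi_int (sqrt (y / PI)))).
  apply (is_lim_minus _ (fun _ => gauss_pi_int (sqrt (y / PI))) p_infty (1 / 2) (gauss_pi_int (sqrt (y / PI))));
    [| apply is_lim_const | reflexivity].
  apply (is_lim_comp gauss_pi_int (fun b => sqrt (b / PI)) p_infty (1 / 2) p_infty).
  - apply is_lim_gauss_pi_int.
  - apply is_lim_sqrt_p. apply (is_lim_ext (fun b => / PI * b)); [intros; unfold Rdiv; ring |].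
    apply is_lim_scal_pos_p_infty, Rinv_0_lt_compat; lra.
  - exists 0. intros; discriminate.
Qed.

Lemma inc_gamma_half_PI_sq x : x <> 0 ->
  inc_gamma (1 / 2) (PI * x ^ 2) = 2 * sqrt PI * (1 / 2 - gauss_pi_int (Rabs x)).
Proof.
  intros Hx. pose proof PI_RGT_0.
  rewrite inc_gamma_half_eq by (apply Rmult_lt_0_compat; [lra | apply pow2_gt_0; auto]).
  replace (PI * x ^ 2 / PI) with x² by (unfold Rsqr; field; lra).
  rewrite sqrt_Rsqr_abs. reflexivity.
Qed.

Lemma inc_gamma_half_bounds y : 0 < y -> 0 <= inc_gamma (1 / 2) y <= sqrt PI * exp (- y).
Proof.
  intros Hy. pose proof sqrt_PI_pos. pose proof PI_RGT_0.
  rewrite inc_gamma_half_eq by exact Hy.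
  assert (Hs : 0 <= sqrt (y / PI)) by apply sqrt_pos.
  assert (Hsq : PI * sqrt (y / PI) ^ 2 = y)
    by (rewrite pow2_sqrt by (apply Rdiv_le_0_compat; lra); field; lra).
  pose proof (gauss_pi_int_le_half (sqrt (y / PI))).
  pose proof (half_sub_gauss_pi_int_le _ Hs).
  replace (- PI * sqrt (y / PI) ^ 2) with (- y) in * by lra. split; nra.
Qed.

Lemma sgn_pos x : 0 < x -> sgn x = 1.
Proof. intros. unfold sgn. destruct (Rlt_dec 0 x); [reflexivity | lra]. Qed.

Lemma sgn_neg x : x < 0 -> sgn x = -1.
Proof. intros. unfold sgn. destruct (Rlt_dec 0 x); [lra |]. destruct (Rlt_dec x 0); [reflexivity | lra]. Qed.

Lemma sgn_mult_pos c y : 0 < c -> sgn (c * y) = sgn y.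
Proof.
  intros Hc. destruct (Rtotal_order y 0) as [H | [-> | H]].
  - rewrite !sgn_neg; nra.
  - rewrite Rmult_0_r. reflexivity.
  - rewrite !sgn_pos; nra.
Qed.

Lemma Rabs_sgn_le_1 y : Rabs (sgn y) <= 1.
Proof. unfold sgn. destruct (Rlt_dec 0 y); [| destruct (Rlt_dec y 0)]; unfold Rabs; destruct Rcase_abs; lra. Qed.

Lemma Efun_sgn x : x <> 0 -> Efun x = sgn x * (1 - inc_gamma (1 / 2) (PI * x ^ 2) / sqrt PI).
Proof.
  intros Hx. pose proof sqrt_PI_pos.
  rewrite inc_gamma_half_PI_sq by exact Hx. unfold Efun. fold (gauss_pi_int x).
  destruct (Rlt_dec 0 x).
  - rewrite sgn_pos, Rabs_right by lra. field. lra.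
  - rewrite sgn_neg, Rabs_left, gauss_pi_int_opp by lra. field. lra.
Qed.

Lemma Efun_opp x : Efun (- x) = - Efun x.
Proof. unfold Efun. fold (gauss_pi_int (- x)) (gauss_pi_int x). rewrite gauss_pi_int_opp. ring. Qed.

(** * Finite and unordered sums *)

Fixpoint lsum {A} (f : A -> C) (l : list A) : C :=
  match l with nil => RtoC 0 | x :: l' => Cplus (f x) (lsum f l') end.

Fixpoint lsumR {A} (g : A -> R) (l : list A) : R :=
  match l with nil => 0 | x :: l' => g x + lsumR g l' end.

Section ListSums.
Context {A : Type}.
Implicit Types (f : A -> C) (g h : A -> R) (l : list A).

Lemma lsum_app f l1 l2 : lsum f (l1 ++ l2) = Cplus (lsum f l1) (lsum f l2).
Proof. induction l1 as [| x l1 IH]; simpl; [| rewrite IH]; ring. Qed.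

Lemma lsumR_app g l1 l2 : lsumR g (l1 ++ l2) = lsumR g l1 + lsumR g l2.
Proof. induction l1 as [| x l1 IH]; simpl; [| rewrite IH]; ring. Qed.

Lemma lsum_perm f l l' : Permutation l l' -> lsum f l = lsum f l'.
Proof. induction 1; simpl; try ring; congruence. Qed.

Lemma lsumR_perm g l l' : Permutation l l' -> lsumR g l = lsumR g l'.
Proof. induction 1; simpl; try ring; congruence. Qed.

Lemma lsum_ext_in f f' l : (forall x, In x l -> f x = f' x) -> lsum f l = lsum f' l.
Proof. induction l as [| x l IH]; simpl; intros H; auto. rewrite H, IH; auto. Qed.

Lemma lsumR_ext_in g h l : (forall x, In x l -> g x = h x) -> lsumR g l = lsumR h l.
Proof. induction l as [| x l IH]; simpl; intros H; auto. rewrite H, IH; auto. Qed.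

Lemma lsum_map {B} f (k : B -> A) (l : list B) : lsum f (map k l) = lsum (fun x => f (k x)) l.
Proof. induction l as [| x l IH]; simpl; [| rewrite IH]; auto. Qed.

Lemma lsumR_map {B} g (k : B -> A) (l : list B) : lsumR g (map k l) = lsumR (fun x => g (k x)) l.
Proof. induction l as [| x l IH]; simpl; [| rewrite IH]; auto. Qed.

Lemma lsum_plus f f' l : lsum (fun x => Cplus (f x) (f' x)) l = Cplus (lsum f l) (lsum f' l).
Proof. induction l as [| x l IH]; simpl; [| rewrite IH]; ring. Qed.

Lemma lsum_scal (c : C) f l : lsum (fun x => Cmult c (f x)) l = Cmult c (lsum f l).
Proof. induction l as [| x l IH]; simpl; [| rewrite IH]; ring. Qed.

Lemma lsumR_scal (c : R) g l : lsumR (fun x => c * g x) l = c * lsumR g l.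
Proof. induction l as [| x l IH]; simpl; [| rewrite IH]; ring. Qed.

Lemma lsum_zero f l : (forall x, In x l -> f x = RtoC 0) -> lsum f l = RtoC 0.
Proof. induction l as [| x l IH]; simpl; intros H; auto. rewrite H, IH; auto. ring. Qed.

Lemma Cmod_lsum_le f l : Cmod (lsum f l) <= lsumR (fun x => Cmod (f x)) l.
Proof.
  induction l as [| x l IH]; simpl; [rewrite Cmod_0; lra |].
  eapply Rle_trans; [apply Cmod_triangle | lra].
Qed.

Lemma lsumR_nonneg g l : (forall x, 0 <= g x) -> 0 <= lsumR g l.
Proof. intros H; induction l as [| x l IH]; simpl; [lra | pose proof (H x); lra]. Qed.

Lemma lsumR_le g h l : (forall x, In x l -> g x <= h x) -> lsumR g l <= lsumR h l.
Proof.
  induction l as [| x l IH]; simpl; intros H; [lra |].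
  pose proof (H x (or_introl eq_refl)). pose proof (IH (fun y Hy => H y (or_intror Hy))). lra.
Qed.

Lemma lsum_filter f (p : A -> bool) l :
  lsum f l = Cplus (lsum f (filter p l)) (lsum f (filter (fun x => negb (p x)) l)).
Proof. induction l as [| x l IH]; simpl; [ring |]. destruct (p x); simpl; rewrite IH; ring. Qed.

Lemma lsumR_filter g (p : A -> bool) l :
  lsumR g l = lsumR g (filter p l) + lsumR g (filter (fun x => negb (p x)) l).
Proof. induction l as [| x l IH]; simpl; [ring |]. destruct (p x); simpl; rewrite IH; ring. Qed.

Lemma lsum_filter_support f (p : A -> bool) l :
  (forall x, p x = false -> f x = RtoC 0) -> lsum f l = lsum f (filter p l).
Proof.
  intros H. rewrite (lsum_filter f p l), (lsum_zero f (filter (fun x => negb (p x)) l)); [ring |].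
  intros x Hx. apply filter_In in Hx. apply H. destruct (p x); [discriminate (proj2 Hx) | reflexivity].
Qed.

Lemma lsumR_incl g l l' : NoDup l -> incl l l' -> (forall x, 0 <= g x) -> lsumR g l <= lsumR g l'.
Proof.
  revert l'. induction l as [| a l IH]; intros l' Hnd Hinc Hg; simpl; [apply lsumR_nonneg; auto |].
  inversion Hnd as [| ? ? Ha Hl]; subst.
  destruct (in_split a l') as [l2 [l3 ->]]; [apply Hinc; left; auto |].
  rewrite (lsumR_perm g (l2 ++ a :: l3) (a :: l2 ++ l3)) by (symmetry; apply Permutation_middle).
  simpl. apply Rplus_le_compat_l, IH; auto.
  intros x Hx. specialize (Hinc x (or_intror Hx)).
  apply in_app_or in Hinc. apply in_or_app. destruct Hinc as [H | [-> | H]]; tauto.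
Qed.

End ListSums.

Lemma lsum_prod {A B} (F : A * B -> C) (l1 : list A) (l2 : list B) :
  lsum F (list_prod l1 l2) = lsum (fun a => lsum (fun b => F (a, b)) l2) l1.
Proof. induction l1 as [| a l1 IH]; simpl; auto. rewrite lsum_app, lsum_map, IH. reflexivity. Qed.

Lemma lsumR_prod {A B} (F : A * B -> R) (l1 : list A) (l2 : list B) :
  lsumR F (list_prod l1 l2) = lsumR (fun a => lsumR (fun b => F (a, b)) l2) l1.
Proof. induction l1 as [| a l1 IH]; simpl; auto. rewrite lsumR_app, lsumR_map, IH. reflexivity. Qed.

Lemma lsum_flat_map {A B} (F : B -> C) (f : A -> list B) l :
  lsum F (flat_map f l) = lsum (fun x => lsum F (f x)) l.
Proof. induction l as [| a l IH]; simpl; auto. rewrite lsum_app, IH. reflexivity. Qed.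

Lemma sum_n_lsum (g : nat -> C) m : sum_n g m = lsum g (seq 0 (S m)).
Proof.
  induction m as [| m IH].
  - rewrite sum_O. simpl. ring.
  - rewrite sum_Sn, IH, (seq_S (S m) 0), lsum_app. simpl. unfold plus; simpl. ring.
Qed.

Section UnorderedSums.
Context {A : Type}.
Variable A_eq_dec : forall x y : A, {x = y} + {x <> y}.
Implicit Types (F G : A -> C) (L : list A).

Definition has_usum (F : A -> C) (s : C) : Prop :=
  forall eps, 0 < eps -> exists L0 : list A,
    forall L, NoDup L -> incl L0 L -> Cmod (Cminus (lsum F L) s) <= eps.

Definition abs_tail_small (F : A -> C) : Prop :=
  forall eps, 0 < eps -> exists L0 : list A,
    forall L, NoDup L -> (forall x, In x L -> ~ In x L0) -> lsumR (fun x => Cmod (F x)) L <= eps.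

Lemma has_usum_ext F G s : (forall x, F x = G x) -> has_usum F s -> has_usum G s.
Proof.
  intros E H eps He. destruct (H eps He) as [L0 H0]. exists L0. intros L HL I.
  rewrite <- (lsum_ext_in F G); auto.
Qed.

Lemma has_usum_plus F G s t :
  has_usum F s -> has_usum G t -> has_usum (fun x => Cplus (F x) (G x)) (Cplus s t).
Proof.
  intros Hs Ht eps He.
  destruct (Hs (eps / 2)) as [L0 H0]; [lra |]. destruct (Ht (eps / 2)) as [L1 H1]; [lra |].
  exists (L0 ++ L1). intros L HL I. rewrite lsum_plus.
  replace (Cminus (Cplus (lsum F L) (lsum G L)) (Cplus s t))
    with (Cplus (Cminus (lsum F L) s) (Cminus (lsum G L) t)) by ring.
  eapply Rle_trans; [apply Cmod_triangle |].
  assert (Cmod (Cminus (lsum F L) s) <= eps / 2) by (apply H0; auto; intros x Hx; apply I, in_or_app; auto).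
  assert (Cmod (Cminus (lsum G L) t) <= eps / 2) by (apply H1; auto; intros x Hx; apply I, in_or_app; auto).
  lra.
Qed.

Lemma has_usum_scal F s c : has_usum F s -> has_usum (fun x => Cmult c (F x)) (Cmult c s).
Proof.
  intros Hs eps He. pose proof (Cmod_ge_0 c).
  destruct (Hs (eps / (1 + Cmod c))) as [L0 H0]; [apply Rdiv_lt_0_compat; lra |].
  exists L0. intros L HL I. specialize (H0 L HL I).
  rewrite lsum_scal.
  replace (Cminus (Cmult c (lsum F L)) (Cmult c s)) with (Cmult c (Cminus (lsum F L) s)) by ring.
  rewrite Cmod_mult.
  apply Rle_trans with (Cmod c * (eps / (1 + Cmod c))); [apply Rmult_le_compat_l; lra |].
  apply Rle_trans with ((1 + Cmod c) * (eps / (1 + Cmod c))).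
  - apply Rmult_le_compat_r; [apply Rlt_le, Rdiv_lt_0_compat |]; lra.
  - right. field. lra.
Qed.

Definition ldiff (L' L : list A) : list A :=
  filter (fun x => if In_dec A_eq_dec x L then false else true) L'.

Lemma in_ldiff x L' L : In x (ldiff L' L) <-> In x L' /\ ~ In x L.
Proof.
  unfold ldiff. rewrite filter_In.
  destruct (In_dec A_eq_dec x L); split; intros; intuition; discriminate.
Qed.

Lemma lsum_incl_split F L L' : NoDup L -> NoDup L' -> incl L L' ->
  lsum F L' = Cplus (lsum F L) (lsum F (ldiff L' L)).
Proof.
  intros HL HL' Hi. rewrite (lsum_filter F (fun x => if In_dec A_eq_dec x L then true else false) L').
  f_equal.
  - apply lsum_perm, NoDup_Permutation; [apply NoDup_filter; auto | auto |].
    intros x. rewrite filter_In. destruct (In_dec A_eq_dec x L); intuition; discriminate.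
  - unfold ldiff. f_equal. apply filter_ext. intros x. destruct (In_dec A_eq_dec x L); reflexivity.
Qed.

Lemma Cmod_lsum_sub_le F L0 L L' eps :
  (forall L, NoDup L -> (forall x, In x L -> ~ In x L0) -> lsumR (fun x => Cmod (F x)) L <= eps) ->
  NoDup L -> NoDup L' -> incl L L' -> incl L0 L -> Cmod (Cminus (lsum F L') (lsum F L)) <= eps.
Proof.
  intros H HL HL' I I0. rewrite (lsum_incl_split F L L') by auto.
  replace (Cminus (Cplus (lsum F L) (lsum F (ldiff L' L))) (lsum F L)) with (lsum F (ldiff L' L)) by ring.
  eapply Rle_trans; [apply Cmod_lsum_le | apply H].
  - apply NoDup_filter; auto.
  - intros x Hx Hx0. apply in_ldiff in Hx. apply Hx, I0, Hx0.
Qed.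

Lemma has_usum_support F s : has_usum F s ->
  forall eps, 0 < eps -> exists L0 : list A, forall L, NoDup L ->
    (forall x, In x L0 -> F x <> RtoC 0 -> In x L) -> Cmod (Cminus (lsum F L) s) <= eps.
Proof.
  intros H eps He. destruct (H eps He) as [L0 H0]. exists L0. intros L HL Hsupp.
  set (R0 := ldiff (nodup A_eq_dec L0) L).
  replace (lsum F L) with (lsum F (L ++ R0)).
  - apply H0.
    + apply NoDup_app; auto; [apply NoDup_filter, NoDup_nodup |].
      intros x Hx Hx'. apply in_ldiff in Hx'. tauto.
    + intros x Hx. apply in_or_app. destruct (In_dec A_eq_dec x L); [left; auto | right].
      apply in_ldiff. rewrite nodup_In. auto.
  - rewrite lsum_app, (lsum_zero F R0); [ring |].
    intros x Hx. apply in_ldiff in Hx. rewrite nodup_In in Hx. destruct Hx as [Hx0 HxL].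
    destruct (Ceq_dec (F x) (RtoC 0)) as [E | E]; [exact E | contradiction (HxL (Hsupp x Hx0 E))].
Qed.

End UnorderedSums.

Lemma has_usum_reindex {A B} (F : A -> C) (phi : B -> A) (psi : A -> B) (P : A -> bool) s :
  (forall u, psi (phi u) = u) -> (forall x, P x = true -> phi (psi x) = x) ->
  (forall u, P (phi u) = true) -> (forall x, P x = false -> F x = RtoC 0) ->
  has_usum (fun u => F (phi u)) s -> has_usum F s.
Proof.
  intros Hpsi Hphi HP Hsupp Hs eps He. destruct (Hs eps He) as [L0 H0].
  exists (map phi L0). intros L HL I.
  rewrite (lsum_filter_support F P L Hsupp).
  set (L1 := filter P L).
  assert (E : map phi (map psi L1) = L1).
  { rewrite map_map. rewrite <- (map_id L1) at 2. apply map_ext_in.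
    intros x Hx. apply Hphi. unfold L1 in Hx. apply filter_In in Hx. tauto. }
  rewrite <- E, lsum_map. apply H0.
  - apply (NoDup_map_inv phi). rewrite E. apply NoDup_filter; auto.
  - intros u Hu. apply in_map_iff. exists (phi u). split; auto.
    apply filter_In. split; auto. apply I, in_map; auto.
Qed.

(** * Sums over [Z * Z] *)

Definition zpair_eq_dec : forall x y : Z * Z, {x = y} + {x <> y}.
Proof. decide equality; apply Z.eq_dec. Defined.

Definition zinterval (N : nat) : list Z := map (zshift N) (seq 0 (S (2 * N))).

Definition zsquare (N : nat) : list (Z * Z) := list_prod (zinterval N) (zinterval N).

Definition zsup (L : list (Z * Z)) : nat :=
  fold_right (fun p m => Nat.max (Z.abs_nat (fst p)) (Nat.max (Z.abs_nat (snd p)) m)) 0%nat L.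

Lemma in_zinterval N a : In a (zinterval N) <-> (- Z.of_nat N <= a <= Z.of_nat N)%Z.
Proof.
  unfold zinterval, zshift. rewrite in_map_iff. split.
  - intros [k [<- Hk]]. apply in_seq in Hk. lia.
  - intros H. exists (Z.to_nat (a + Z.of_nat N)). rewrite in_seq. lia.
Qed.

Lemma NoDup_map_injective {A B} (f : A -> B) l :
  (forall x y, f x = f y -> x = y) -> NoDup l -> NoDup (map f l).
Proof. intros Hf. apply FinFun.Injective_map_NoDup. exact Hf. Qed.

Lemma NoDup_list_prod {A B} (l1 : list A) (l2 : list B) :
  NoDup l1 -> NoDup l2 -> NoDup (list_prod l1 l2).
Proof.
  intros H1 H2. induction H1 as [| a l1 Ha H1 IH]; simpl; [constructor |].
  apply NoDup_app; auto.
  - apply NoDup_map_injective; auto. intros x y E; inversion E; auto.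
  - intros p Hp Hp'. apply in_map_iff in Hp as [y [<- _]].
    apply in_prod_iff in Hp'. tauto.
Qed.

Lemma NoDup_zinterval N : NoDup (zinterval N).
Proof. apply NoDup_map_injective; [unfold zshift; intros x y E; lia | apply seq_NoDup]. Qed.

Lemma NoDup_zsquare N : NoDup (zsquare N).
Proof. apply NoDup_list_prod; apply NoDup_zinterval. Qed.

Lemma in_zsquare N a b :
  In (a, b) (zsquare N) <-> (Z.abs a <= Z.of_nat N /\ Z.abs b <= Z.of_nat N)%Z.
Proof. unfold zsquare. rewrite in_prod_iff, !in_zinterval. lia. Qed.

Lemma incl_zsquare_zsup L N : (zsup L <= N)%nat -> incl L (zsquare N).
Proof.
  induction L as [| [a b] L IH]; simpl; intros H x Hx; [destruct Hx |].
  destruct Hx as [<- | Hx]; [apply in_zsquare; lia | apply IH; [lia | exact Hx]].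
Qed.

Lemma sq_sum_lsum (F : Z * Z -> C) N : sq_sum (fun a b => F (a, b)) N = lsum F (zsquare N).
Proof.
  unfold sq_sum, zsquare, zinterval. rewrite lsum_prod, lsum_map, sum_n_lsum.
  apply lsum_ext_in. intros i _. rewrite lsum_map, sum_n_lsum. reflexivity.
Qed.

Lemma has_sum_Z2_of_has_usum (F : Z * Z -> C) s : has_usum F s -> has_sum_Z2 (fun a b => F (a, b)) s.
Proof.
  intros H. unfold has_sum_Z2. apply (proj2 (@filterlim_locally_ball_norm _ _ C_NormedModule _ _ _ _)). intros eps.
  destruct (H (eps / 2)) as [L0 HL0]; [destruct eps; simpl; lra |].
  exists (zsup L0). intros N HN. unfold ball_norm. rewrite sq_sum_lsum.
  eapply Rle_lt_trans; [apply HL0; [apply NoDup_zsquare | apply incl_zsquare_zsup; lia] |].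
  destruct eps; simpl; lra.
Qed.

Lemma zsquare_sums_converge (F : Z * Z -> C) :
  abs_tail_small F -> exists y, filterlim (fun N => lsum F (zsquare N)) eventually (locally y).
Proof.
  intros HT. apply (proj1 (@filterlim_locally_cauchy _ C_CompleteNormedModule _ _ _)). intros eps.
  destruct (HT (eps / 3)) as [L0 H0]; [destruct eps; simpl; lra |].
  assert (Hb : forall n, (zsup L0 <= n)%nat ->
            Cmod (Cminus (lsum F (zsquare n)) (lsum F (zsquare (zsup L0)))) <= eps / 3).
  { intros n Hn. apply (Cmod_lsum_sub_le zpair_eq_dec F L0); auto using NoDup_zsquare.
    - intros [a b] Hx. apply in_zsquare. apply in_zsquare in Hx. lia.
    - apply incl_zsquare_zsup. lia. }
  exists (fun n => (zsup L0 <= n)%nat). split; [exists (zsup L0); auto |].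
  intros u v Hu Hv. apply (norm_compat1 (V := C_NormedModule)).
  change (Cmod (Cminus (lsum F (zsquare v)) (lsum F (zsquare u))) < eps).
  replace (Cminus (lsum F (zsquare v)) (lsum F (zsquare u))) with
    (Cminus (Cminus (lsum F (zsquare v)) (lsum F (zsquare (zsup L0))))
            (Cminus (lsum F (zsquare u)) (lsum F (zsquare (zsup L0))))) by ring.
  eapply Rle_lt_trans; [apply Cmod_triangle |]. rewrite Cmod_opp.
  pose proof (Hb u Hu). pose proof (Hb v Hv). destruct eps; simpl in *; lra.
Qed.

Lemma has_usum_of_abs_tail_small (F : Z * Z -> C) : abs_tail_small F -> exists s, has_usum F s.
Proof.
  intros HT. destruct (zsquare_sums_converge F HT) as [y Hy]. exists y. intros eps He.
  destruct (HT (eps / 2)) as [L0 H0]; [lra |].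
  exists L0. intros L HL I0.
  pose proof (proj1 (@filterlim_locally_ball_norm _ _ C_NormedModule _ _ _ _) Hy (mkposreal _ (Rdiv_lt_0_compat eps 2 He Rlt_0_2)))
    as [N1 HN1].
  set (N := Nat.max (zsup L) N1).
  assert (D1 : Cmod (Cminus (lsum F (zsquare N)) (lsum F L)) <= eps / 2).
  { apply (Cmod_lsum_sub_le zpair_eq_dec F L0); auto using NoDup_zsquare.
    apply incl_zsquare_zsup. unfold N; lia. }
  assert (D2 : Cmod (Cminus (lsum F (zsquare N)) y) < eps / 2) by (apply HN1; unfold N; lia).
  replace (Cminus (lsum F L) y) with
    (Cminus (Cminus (lsum F (zsquare N)) y) (Cminus (lsum F (zsquare N)) (lsum F L))) by ring.
  eapply Rle_trans; [apply Cmod_triangle |]. rewrite Cmod_opp. lra.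
Qed.

Section GeometricTails.
Variable r : R.
Hypothesis r_range : 0 <= r < 1.

Lemma lsumR_pow_seq n d : lsumR (pow r) (seq n d) <= r ^ n / (1 - r).
Proof.
  revert n. induction d as [| d IH]; intros n; simpl.
  - apply Rdiv_le_0_compat; [apply pow_le |]; lra.
  - specialize (IH (S n)). simpl in IH.
    apply Rle_trans with (r ^ n + r * r ^ n / (1 - r)); [lra | right; field; lra].
Qed.

(* Lists [0] twice when [N = 0]; harmless, since only duplicate-free lists are included into it. *)
Definition zannulus (N M : nat) : list Z :=
  map Z.of_nat (seq N (S M - N)) ++ map (fun k => (- Z.of_nat k)%Z) (seq N (S M - N)).

Lemma in_zannulus N M a : (N <= Z.abs_nat a <= M)%nat -> In a (zannulus N M).
Proof.
  intros H. unfold zannulus. apply in_or_app.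
  destruct (Z_le_gt_dec 0 a); [left | right]; apply in_map_iff;
    exists (Z.abs_nat a); rewrite in_seq; lia.
Qed.

Lemma lsumR_zannulus N M : lsumR (fun a => r ^ Z.abs_nat a) (zannulus N M) <= 2 * (r ^ N / (1 - r)).
Proof.
  unfold zannulus. rewrite lsumR_app, !lsumR_map.
  rewrite (lsumR_ext_in _ (pow r)) by (intros; f_equal; lia).
  rewrite (lsumR_ext_in (fun k => r ^ Z.abs_nat (- Z.of_nat k)) (pow r)) by (intros; f_equal; lia).
  pose proof (lsumR_pow_seq N (S M - N)). lra.
Qed.

Lemma lsumR_geometric_incl_prod K (L : list (Z * Z)) l1 l2 : 0 <= K -> NoDup L -> incl L (list_prod l1 l2) ->
  lsumR (fun x => K * r ^ Z.abs_nat (fst x) * r ^ Z.abs_nat (snd x)) L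
  <= K * lsumR (fun a => r ^ Z.abs_nat a) l1 * lsumR (fun b => r ^ Z.abs_nat b) l2.
Proof.
  intros HK HL Hi. eapply Rle_trans.
  - apply lsumR_incl; [exact HL | exact Hi | intros x].
    apply Rmult_le_pos; [apply Rmult_le_pos; [exact HK |] |]; apply pow_le; lra.
  - right. set (S2 := lsumR (fun b => r ^ Z.abs_nat b) l2). rewrite lsumR_prod.
    rewrite (lsumR_ext_in _ (fun a => K * r ^ Z.abs_nat a * S2)).
    + rewrite (lsumR_ext_in _ (fun a => (K * S2) * r ^ Z.abs_nat a)) by (intros; ring).
      rewrite lsumR_scal. ring.
    + intros a _. unfold S2. rewrite <- lsumR_scal. apply lsumR_ext_in. intros; simpl; ring.
Qed.

Lemma lsumR_geometric_outside_zsquare K (L : list (Z * Z)) N : 0 <= K -> NoDup L ->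
  (forall x, In x L -> ~ In x (zsquare N)) ->
  lsumR (fun x => K * r ^ Z.abs_nat (fst x) * r ^ Z.abs_nat (snd x)) L <= 8 * K * r ^ N / (1 - r) ^ 2.
Proof.
  intros HK HL Hout. set (M := zsup L).
  assert (HM : forall a b, In (a, b) L -> (Z.abs_nat a <= M /\ Z.abs_nat b <= M)%nat).
  { intros a b Hx. apply (incl_zsquare_zsup L M (le_n _)), in_zsquare in Hx. lia. }
  assert (Hfar : forall a b, In (a, b) L -> (N < Z.abs_nat a \/ N < Z.abs_nat b)%nat).
  { intros a b Hx. specialize (Hout _ Hx). rewrite in_zsquare in Hout. lia. }
  assert (Hin : lsumR (fun a => r ^ Z.abs_nat a) (zannulus (S N) M) <= 2 * (r ^ N / (1 - r))).
  { eapply Rle_trans; [apply lsumR_zannulus |]. simpl.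
    pose proof (pow_le r N (proj1 r_range)). apply Rmult_le_compat_l; [lra |].
    apply Rmult_le_compat_r; [apply Rlt_le, Rinv_0_lt_compat |]; nra. }
  assert (Hall : lsumR (fun a => r ^ Z.abs_nat a) (zannulus 0 M) <= 2 / (1 - r)).
  { eapply Rle_trans; [apply lsumR_zannulus | simpl; lra]. }
  assert (Hin0 : 0 <= lsumR (fun a => r ^ Z.abs_nat a) (zannulus (S N) M))
    by (apply lsumR_nonneg; intros; apply pow_le; lra).
  assert (Hall0 : 0 <= lsumR (fun a => r ^ Z.abs_nat a) (zannulus 0 M))
    by (apply lsumR_nonneg; intros; apply pow_le; lra).
  set (p := fun x : Z * Z => Nat.ltb N (Z.abs_nat (fst x))).
  rewrite (lsumR_filter _ p L).
  assert (H1 : incl (filter p L) (list_prod (zannulus (S N) M) (zannulus 0 M))).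
  { intros [a b] Hx. apply filter_In in Hx as [Hx Hp]. apply Nat.ltb_lt in Hp. simpl in Hp.
    apply HM in Hx. apply in_prod; apply in_zannulus; lia. }
  assert (H2 : incl (filter (fun x => negb (p x)) L) (list_prod (zannulus 0 M) (zannulus (S N) M))).
  { intros [a b] Hx. apply filter_In in Hx as [Hx Hp]. apply Bool.negb_true_iff, Nat.ltb_ge in Hp.
    simpl in Hp. pose proof (Hfar a b Hx). apply HM in Hx. apply in_prod; apply in_zannulus; lia. }
  apply (lsumR_geometric_incl_prod K) in H1; [| exact HK | apply NoDup_filter; exact HL].
  apply (lsumR_geometric_incl_prod K) in H2; [| exact HK | apply NoDup_filter; exact HL].
  assert (E : 8 * K * r ^ N / (1 - r) ^ 2 = 2 * (K * (2 * (r ^ N / (1 - r))) * (2 / (1 - r))))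
    by (field; lra).
  rewrite E.
  assert (K * lsumR (fun a => r ^ Z.abs_nat a) (zannulus (S N) M) * lsumR (fun a => r ^ Z.abs_nat a) (zannulus 0 M)
          <= K * (2 * (r ^ N / (1 - r))) * (2 / (1 - r))).
  { apply Rmult_le_compat; [apply Rmult_le_pos | | apply Rmult_le_compat_l |]; auto. }
  nra.
Qed.

Lemma abs_tail_small_of_geometric_bound (F : Z * Z -> C) K : 0 <= K ->
  (forall a b, Cmod (F (a, b)) <= K * r ^ Z.abs_nat a * r ^ Z.abs_nat b) -> abs_tail_small F.
Proof.
  intros HK HF eps He.
  set (B := 8 * (K + 1) / (1 - r) ^ 2).
  assert (HB : 0 < B) by (unfold B; apply Rdiv_lt_0_compat; [| apply pow_lt]; lra).
  destruct (pow_lt_1_zero r ltac:(rewrite Rabs_right; lra) (eps / B)) as [N HN];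
    [apply Rdiv_lt_0_compat; auto |].
  specialize (HN N (le_n _)). rewrite Rabs_right in HN by (apply Rle_ge, pow_le; lra).
  exists (zsquare N). intros L HL Hout.
  apply Rle_trans with (lsumR (fun x => K * r ^ Z.abs_nat (fst x) * r ^ Z.abs_nat (snd x)) L).
  { apply lsumR_le. intros [a b] _. apply HF. }
  eapply Rle_trans; [apply lsumR_geometric_outside_zsquare; auto |].
  apply (Rmult_lt_compat_l B) in HN; [| exact HB]. replace (B * (eps / B)) with eps in HN by (field; lra).
  unfold B in HN.
  assert (Ht : 0 <= r ^ N / (1 - r) ^ 2) by (apply Rdiv_le_0_compat; [apply pow_le | apply pow_lt]; lra).
  replace (8 * (K + 1) / (1 - r) ^ 2 * r ^ N) with (8 * (K + 1) * (r ^ N / (1 - r) ^ 2)) in HN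
    by (field; lra).
  replace (8 * K * r ^ N / (1 - r) ^ 2) with (8 * K * (r ^ N / (1 - r) ^ 2)) by (field; lra).
  nra.
Qed.

End GeometricTails.

(** * Exponentials and alternating signs *)

Lemma cexp_add z w : cexp (Cplus z w) = Cmult (cexp z) (cexp w).
Proof.
  destruct z as [a b], w as [c d]. unfold cexp, Cplus, Cmult; simpl.
  rewrite exp_plus, cos_plus, sin_plus. f_equal; ring.
Qed.

Lemma cexp_0 : cexp (RtoC 0) = RtoC 1.
Proof. unfold cexp; simpl. rewrite exp_0, cos_0, sin_0. unfold RtoC. f_equal; ring. Qed.

Lemma cexp_i_mult x : cexp (Cmult Ci (RtoC x)) = (cos x, sin x).
Proof.
  replace (Cmult Ci (RtoC x)) with ((0, x) : C) by (unfold Cmult, Ci, RtoC; simpl; f_equal; ring).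
  unfold cexp; simpl. rewrite exp_0. f_equal; ring.
Qed.

Lemma Cmod_cexp z : Cmod (cexp z) = exp (Re z).
Proof.
  destruct z as [a b]. unfold cexp, Cmod; cbn [fst snd Re Im].
  replace ((exp a * cos b) ^ 2 + (exp a * sin b) ^ 2) with ((exp a) ^ 2 * ((sin b)² + (cos b)²))
    by (unfold Rsqr; ring).
  rewrite sin2_cos2, Rmult_1_r. apply sqrt_pow2, Rlt_le, exp_pos.
Qed.

Lemma qpow_add tau a b : qpow tau (a + b) = Cmult (qpow tau a) (qpow tau b).
Proof.
  unfold qpow. rewrite <- cexp_add. f_equal.
  replace (2 * PI * (a + b)) with (2 * PI * a + 2 * PI * b) by ring.
  rewrite RtoC_plus. ring.
Qed.

Lemma Cmod_qpow tau a : Cmod (qpow tau a) = exp (- (2 * PI * a * Im tau)).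
Proof.
  unfold qpow. rewrite Cmod_cexp. f_equal. destruct tau as [u v]. unfold Cmult, Ci, RtoC; simpl. ring.
Qed.

Lemma Cmod_RtoC_mult (x : R) (z : C) : Cmod (Cmult (RtoC x) z) = Rabs x * Cmod z.
Proof. rewrite Cmod_mult, Cmod_R. reflexivity. Qed.

Lemma exp_pow a k : exp a ^ k = exp (a * INR k).
Proof.
  induction k as [| k IH]; [simpl; rewrite Rmult_0_r, exp_0; reflexivity |].
  rewrite S_INR, <- tech_pow_Rmult, IH, <- exp_plus. f_equal. ring.
Qed.

Lemma exp_neg_pow_abs c a : exp (- c) ^ Z.abs_nat a = exp (- c * IZR (Z.abs a)).
Proof. rewrite exp_pow, INR_IZR_INZ. do 3 f_equal. lia. Qed.

Definition alt (k : Z) : R := if Z.even k then 1 else -1.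

Lemma alt_succ k : alt (k + 1) = - alt k.
Proof. unfold alt. rewrite Z.even_add. simpl. destruct (Z.even k); simpl; lra. Qed.

Lemma alt_pred k : alt (k - 1) = - alt k.
Proof. unfold alt. rewrite Z.even_sub. simpl. destruct (Z.even k); simpl; lra. Qed.

Lemma alt_add_even a k : alt (a + 2 * k) = alt a.
Proof. unfold alt. rewrite Z.even_add, Z.even_mul. simpl. destruct (Z.even a); reflexivity. Qed.

Lemma Rabs_alt k : Rabs (alt k) = 1.
Proof. unfold alt. destruct (Z.even k); unfold Rabs; destruct Rcase_abs; lra. Qed.

Lemma pow_neg1_alt k : (-1) ^ k = alt (Z.of_nat k).
Proof.
  induction k as [| k IH]; [reflexivity |].
  rewrite Nat2Z.inj_succ, <- Z.add_1_r, alt_succ, <- IH. simpl. ring.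
Qed.

Lemma cos_PI_mult_IZR k : cos (PI * IZR k) = alt k.
Proof.
  induction k as [| k IH | k IH] using Z.peano_ind.
  - rewrite Rmult_0_r, cos_0. reflexivity.
  - rewrite <- Z.add_1_r, alt_succ, plus_IZR, Rmult_plus_distr_l, Rmult_1_r, neg_cos, IH. reflexivity.
  - rewrite <- Z.sub_1_r, alt_pred, minus_IZR, Rmult_minus_distr_l, Rmult_1_r.
    rewrite cos_minus, cos_PI, sin_PI, IH. ring.
Qed.

(** * Splitting the theta terms *)

Definition zeta6 : C := cexp (Cmult Ci (RtoC (PI / 3))).

(* A point [m] of [Z * Z] encodes [n = m + avec = (m1 + 1/3, m2)]; then [B(c1, n) = 6 * cone_lin m]
   and [B(c2, n) = - 6 * cone_lin (zreflect m)]. *)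
Definition cone_lin (m : Z * Z) : R := IZR (fst m) + 1 / 3 - IZR (snd m).

Definition zreflect (m : Z * Z) : Z * Z := (fst m, (- snd m)%Z).

Definition theta_weight (tau : C) (m : Z * Z) : C :=
  Cmult (Cmult zeta6 (RtoC (alt (fst m + snd m))))
        (qpow tau (3 * (IZR (fst m) + 1 / 3) ^ 2 - IZR (snd m) ^ 2)).

Definition gamma_coef (tau : C) (d : R) : R :=
  - (sgn d * inc_gamma (1 / 2) (6 * PI * d ^ 2 * Im tau)) / sqrt PI.

Definition theta_sign_part (tau : C) (m : Z * Z) : C :=
  Cmult (RtoC (sgn (cone_lin m) + sgn (cone_lin (zreflect m)))) (theta_weight tau m).

Definition theta_gamma_part (tau : C) (m : Z * Z) : C :=
  Cmult (RtoC (gamma_coef tau (cone_lin m))) (theta_weight tau m).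

Lemma cone_lin_IZR m : cone_lin m = IZR (fst m - snd m) + 1 / 3.
Proof. unfold cone_lin. rewrite minus_IZR. ring. Qed.

Lemma IZR_add_third_neq_0 k : IZR k + 1 / 3 <> 0.
Proof.
  intros H. assert (E : IZR (3 * k) = IZR (-1)) by (rewrite mult_IZR; lra).
  apply eq_IZR in E. lia.
Qed.

Lemma cone_lin_neq_0 m : cone_lin m <> 0.
Proof. rewrite cone_lin_IZR. apply IZR_add_third_neq_0. Qed.

Lemma theta_weight_zreflect tau m : theta_weight tau (zreflect m) = theta_weight tau m.
Proof.
  destruct m as [m1 m2]. unfold theta_weight, zreflect; cbn [fst snd].
  replace (m1 + m2)%Z with (m1 + - m2 + 2 * m2)%Z by ring. rewrite alt_add_even, opp_IZR.
  do 3 f_equal. ring.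
Qed.

Lemma theta_phase m1 m2 :
  cexp (Cmult Ci (RtoC (2 * PI * Bf bvec (IZR m1 + fst avec, IZR m2 + snd avec))))
  = Cmult zeta6 (RtoC (alt (m1 + m2))).
Proof.
  replace (2 * PI * Bf bvec (IZR m1 + fst avec, IZR m2 + snd avec)) with (PI / 3 + PI * IZR (m1 + m2))
    by (unfold Bf, Qf, bvec, avec; simpl; rewrite plus_IZR; field).
  rewrite RtoC_plus, Cmult_plus_distr_l, cexp_add. unfold zeta6. f_equal.
  rewrite cexp_i_mult, cos_PI_mult_IZR, (sin_eq_0_1 (PI * IZR (m1 + m2))) by (exists (m1 + m2)%Z; ring).
  reflexivity.
Qed.

Lemma Efun_mult_sqrt tau d : 0 < Im tau -> d <> 0 ->
  Efun (d * sqrt (6 * Im tau)) = sgn d + gamma_coef tau d.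
Proof.
  intros Hv Hd. pose proof sqrt_PI_pos.
  assert (Hs : 0 < sqrt (6 * Im tau)) by (apply sqrt_lt_R0; lra).
  rewrite Efun_sgn by (apply Rmult_integral_contrapositive; lra).
  rewrite (Rmult_comm d), sgn_mult_pos by exact Hs.
  replace (PI * (sqrt (6 * Im tau) * d) ^ 2) with (6 * PI * d ^ 2 * Im tau)
    by (rewrite Rpow_mult_distr, pow2_sqrt by lra; ring).
  unfold gamma_coef. field. lra.
Qed.

Lemma six_mult_div_sqrt6 x y : 0 <= y -> 6 * x * sqrt y / sqrt 6 = x * sqrt (6 * y).
Proof.
  intros Hy. assert (H6 : sqrt 6 * sqrt 6 = 6) by (apply sqrt_sqrt; lra).
  assert (0 < sqrt 6) by (apply sqrt_lt_R0; lra).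
  rewrite sqrt_mult_alt by lra. rewrite <- H6 at 1. field. lra.
Qed.

Lemma theta_term_split tau m1 m2 : 0 < Im tau ->
  theta_term tau m1 m2 = Cplus (Cplus (theta_sign_part tau (m1, m2)) (theta_gamma_part tau (m1, m2)))
                               (theta_gamma_part tau (zreflect (m1, m2))).
Proof.
  intros Hv. set (m := (m1, m2)). set (n := (IZR m1 + fst avec, IZR m2 + snd avec)).
  unfold theta_term. rewrite theta_phase. fold n.
  replace (- Qf Defs.c1) with 6 by (unfold Qf, Defs.c1; cbn [fst snd]; ring).
  replace (- Qf Defs.c2) with 6 by (unfold Qf, Defs.c2; cbn [fst snd]; ring).
  replace (Bf Defs.c1 n) with (6 * cone_lin m)
    by (unfold m, n, Bf, Qf, Defs.c1, avec, cone_lin; cbn [fst snd]; field).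
  replace (Bf Defs.c2 n) with (6 * - cone_lin (zreflect m))
    by (unfold m, n, Bf, Qf, Defs.c2, avec, cone_lin, zreflect; cbn [fst snd]; rewrite opp_IZR; field).
  rewrite !six_mult_div_sqrt6, Ropp_mult_distr_l_reverse, Efun_opp by lra.
  rewrite !Efun_mult_sqrt by auto using cone_lin_neq_0.
  unfold theta_sign_part, theta_gamma_part. rewrite theta_weight_zreflect.
  replace (Qf n) with (3 * (IZR m1 + 1 / 3) ^ 2 - IZR m2 ^ 2) by (unfold n, Qf, avec; cbn [fst snd]; ring).
  unfold theta_weight, m; cbn [fst snd]. rewrite RtoC_minus, RtoC_opp, !RtoC_plus. ring.
Qed.

(** * The gamma parts and [H^-] *)

Definition gamma_const : C := Cmult (RtoC (- / sqrt PI)) zeta6.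

(* [(n, r) |-> (n - r, n - 3 r - e)] is a bijection from the index set of [H^-] (with [eps = e])
   onto the points with [m1 - m2 = e (mod 2)]; it sends [2 r + e + 1/3] to [cone_lin]. *)
Definition hminus_to_theta (e : Z) (u : Z * Z) : Z * Z := (fst u - snd u, fst u - 3 * snd u - e)%Z.

Definition theta_to_hminus (e : Z) (m : Z * Z) : Z * Z :=
  (fst m + (fst m - snd m - e) / 2, (fst m - snd m - e) / 2)%Z.

Definition parity_class (e : Z) (m : Z * Z) : bool := Z.even (fst m - snd m - e).

Lemma theta_gamma_part_hminus tau e u :
  theta_gamma_part tau (hminus_to_theta e u)
  = Cmult (Cmult gamma_const (RtoC (alt e))) (Hminus_term tau (IZR e) (fst u) (snd u)).
Proof.
  destruct u as [n r]. unfold theta_gamma_part, theta_weight, hminus_to_theta, Hminus_term, gamma_coef, gamma_const.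
  cbn [fst snd].
  replace (cone_lin (n - r, n - 3 * r - e)%Z) with (2 * IZR r + IZR e + 1 / 3)
    by (unfold cone_lin; cbn [fst snd]; rewrite !minus_IZR, !mult_IZR; simpl; ring).
  replace (n - r + (n - 3 * r - e))%Z with (e + 2 * (n - 2 * r - e))%Z by ring.
  rewrite alt_add_even.
  replace (3 * (IZR (n - r) + 1 / 3) ^ 2 - IZR (n - 3 * r - e) ^ 2)
    with (- 3 / 2 * (2 * IZR r + IZR e + 1 / 3) ^ 2 + 1 / 2 * (2 * IZR n + IZR e + 1) ^ 2)
    by (rewrite !minus_IZR, !mult_IZR; simpl; field).
  set (g := sgn (2 * IZR r + IZR e + 1 / 3) * inc_gamma (1 / 2) (6 * PI * (2 * IZR r + IZR e + 1 / 3) ^ 2 * Im tau)).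
  replace (- g / sqrt PI) with (- / sqrt PI * g) by (pose proof sqrt_PI_pos; field; lra).
  rewrite RtoC_mult. ring.
Qed.

Lemma has_usum_theta_gamma_parity tau e s :
  has_usum (fun u => Hminus_term tau (IZR e) (fst u) (snd u)) s ->
  has_usum (fun m => if parity_class e m then theta_gamma_part tau m else RtoC 0)
           (Cmult (Cmult gamma_const (RtoC (alt e))) s).
Proof.
  intros Hs.
  assert (Hclass : forall u, parity_class e (hminus_to_theta e u) = true).
  { intros [n r]. unfold parity_class, hminus_to_theta; cbn [fst snd].
    replace (n - r - (n - 3 * r - e) - e)%Z with (2 * r)%Z by ring. apply Z.even_mul. }
  apply (has_usum_reindex _ (hminus_to_theta e) (theta_to_hminus e) (parity_class e)).
  - intros [n r]. unfold theta_to_hminus, hminus_to_theta; cbn [fst snd].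
    replace (n - r - (n - 3 * r - e) - e)%Z with (r * 2)%Z by ring.
    rewrite Z.div_mul by lia. f_equal; ring.
  - intros [m1 m2] H. unfold parity_class in H. cbn [fst snd] in H.
    apply Z.even_spec in H as [k Hk]. unfold theta_to_hminus, hminus_to_theta; cbn [fst snd].
    rewrite Hk, Z.mul_comm, Z.div_mul by lia. f_equal; lia.
  - exact Hclass.
  - intros m H. rewrite H. reflexivity.
  - apply (has_usum_ext (fun u => Cmult (Cmult gamma_const (RtoC (alt e))) (Hminus_term tau (IZR e) (fst u) (snd u)))).
    + intros u. rewrite Hclass. symmetry. apply theta_gamma_part_hminus.
    + apply has_usum_scal, Hs.
Qed.

Lemma has_usum_theta_gamma_part tau s0 s1 :
  has_usum (fun u => Hminus_term tau 0 (fst u) (snd u)) s0 ->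
  has_usum (fun u => Hminus_term tau 1 (fst u) (snd u)) s1 ->
  has_usum (theta_gamma_part tau) (Cmult gamma_const (Cminus s0 s1)).
Proof.
  intros H0 H1.
  apply (has_usum_ext (fun m => Cplus (if parity_class 0 m then theta_gamma_part tau m else RtoC 0)
                                       (if parity_class 1 m then theta_gamma_part tau m else RtoC 0))).
  { intros m. unfold parity_class.
    replace (fst m - snd m - 1)%Z with (Z.pred (fst m - snd m - 0)) by lia.
    rewrite Z.even_pred, <- Z.negb_even. destruct (Z.even (fst m - snd m - 0)); simpl; ring. }
  replace (Cmult gamma_const (Cminus s0 s1))
    with (Cplus (Cmult (Cmult gamma_const (RtoC (alt 0))) s0) (Cmult (Cmult gamma_const (RtoC (alt 1))) s1))
    by (unfold alt; simpl; replace (RtoC (-1)) with (Copp (RtoC 1)) by (unfold RtoC, Copp; f_equal; simpl; ring);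
        ring).
  apply has_usum_plus; apply has_usum_theta_gamma_parity; assumption.
Qed.

Lemma has_usum_zreflect (F : Z * Z -> C) s : has_usum F s -> has_usum (fun m => F (zreflect m)) s.
Proof.
  assert (Hinv : forall m, zreflect (zreflect m) = m)
    by (intros [a b]; unfold zreflect; cbn [fst snd]; f_equal; lia).
  intros Hs. apply (has_usum_reindex _ zreflect zreflect (fun _ => true)); auto; try discriminate.
  apply (has_usum_ext F); [intros m; rewrite Hinv; reflexivity | exact Hs].
Qed.

(** * The sign part and [H(q)] *)

Definition cone_sign (m : Z * Z) : R :=
  if Z.leb (Z.abs (snd m)) (fst m) then 1 else if Z.leb (fst m) (- Z.abs (snd m) - 1) then -1 else 0.

Definition H_cone_term (tau : C) (m : Z * Z) : C :=
  Cmult (RtoC (cone_sign m * alt (fst m + snd m)))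
        (qpow tau (3 * IZR (fst m) ^ 2 + 2 * IZR (fst m) - IZR (snd m) ^ 2)).

Lemma sgn_IZR_add_third k : sgn (IZR k + 1 / 3) = if Z.leb 0 k then 1 else -1.
Proof.
  destruct (Z.leb_spec 0 k) as [Hk | Hk].
  - apply sgn_pos. apply IZR_le in Hk. lra.
  - apply sgn_neg. assert (Hk' : (k <= -1)%Z) by lia. apply IZR_le in Hk'. lra.
Qed.

Lemma sgn_cone_lin_add m : sgn (cone_lin m) + sgn (cone_lin (zreflect m)) = 2 * cone_sign m.
Proof.
  destruct m as [m1 m2]. rewrite !cone_lin_IZR, !sgn_IZR_add_third.
  unfold cone_sign, zreflect; cbn [fst snd].
  destruct (Z.leb_spec 0 (m1 - m2)), (Z.leb_spec 0 (m1 - - m2)),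
           (Z.leb_spec (Z.abs m2) m1), (Z.leb_spec m1 (- Z.abs m2 - 1)); lra || lia.
Qed.

Lemma theta_sign_part_eq tau m :
  theta_sign_part tau m = Cmult (Cmult (Cmult (RtoC 2) zeta6) (qpow tau (1 / 3))) (H_cone_term tau m).
Proof.
  unfold theta_sign_part, theta_weight, H_cone_term. rewrite sgn_cone_lin_add.
  replace (3 * (IZR (fst m) + 1 / 3) ^ 2 - IZR (snd m) ^ 2)
    with (1 / 3 + (3 * IZR (fst m) ^ 2 + 2 * IZR (fst m) - IZR (snd m) ^ 2)) by field.
  rewrite qpow_add, !RtoC_mult. ring.
Qed.

Definition shell (n : nat) : list (Z * Z) :=
  map (fun b => (Z.of_nat n, b)) (zinterval n) ++ map (fun b => (- Z.of_nat n - 1, b)%Z) (zinterval n).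

Definition shells (N : nat) : list (Z * Z) := flat_map shell (seq 0 (S N)).

Lemma H_cone_term_rows tau n b : (Z.abs b <= Z.of_nat n)%Z ->
  Cplus (H_cone_term tau (Z.of_nat n, b)) (H_cone_term tau (- Z.of_nat n - 1, b)%Z)
  = Cmult (RtoC (alt (Z.of_nat n + b)))
      (Cmult (qpow tau (3 * INR n ^ 2 + 2 * INR n))
        (Cmult (Cplus (RtoC 1) (qpow tau (2 * INR n + 1))) (qpow tau (- IZR b ^ 2)))).
Proof.
  intros Hb. unfold H_cone_term, cone_sign; cbn [fst snd].
  rewrite (proj2 (Z.leb_le _ _)) by lia.
  destruct (Z.leb_spec (Z.abs b) (- Z.of_nat n - 1)); [lia |].
  rewrite (proj2 (Z.leb_le _ _)) by lia.
  replace (- Z.of_nat n - 1 + b)%Z with (Z.of_nat n + b - 1 + 2 * - Z.of_nat n)%Z by ring.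
  rewrite alt_add_even, alt_pred, minus_IZR, opp_IZR, <- INR_IZR_INZ.
  replace (3 * INR n ^ 2 + 2 * INR n - IZR b ^ 2) with (3 * INR n ^ 2 + 2 * INR n + - IZR b ^ 2) by ring.
  replace (3 * (- INR n - 1) ^ 2 + 2 * (- INR n - 1) - IZR b ^ 2)
    with (3 * INR n ^ 2 + 2 * INR n + (2 * INR n + 1) + - IZR b ^ 2) by ring.
  rewrite !qpow_add, !RtoC_mult, RtoC_opp. ring.
Qed.

Lemma H_term_shell tau n : H_term tau n = lsum (H_cone_term tau) (shell n).
Proof.
  unfold H_term, shell, zinterval. rewrite sum_n_lsum, lsum_app, !lsum_map, <- lsum_plus, <- !lsum_scal.
  apply lsum_ext_in. intros k Hk. apply in_seq in Hk.
  rewrite H_cone_term_rows by (unfold zshift; lia).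
  replace (Z.of_nat n + zshift n k)%Z with (Z.of_nat k) by (unfold zshift; ring).
  rewrite <- pow_neg1_alt, RtoC_mult.
  assert (E : Cmult (RtoC ((-1) ^ n)) (RtoC ((-1) ^ n)) = RtoC 1).
  { rewrite <- RtoC_mult, <- Rpow_mult_distr. replace (-1 * -1) with 1 by ring. rewrite pow1. reflexivity. }
  match goal with |- ?L = ?R => transitivity (Cmult (Cmult (RtoC ((-1) ^ n)) (RtoC ((-1) ^ n))) R) end;
    [ring | rewrite E; ring].
Qed.

Lemma in_shell n a b :
  In (a, b) (shell n) <-> ((a = Z.of_nat n \/ a = - Z.of_nat n - 1) /\ Z.abs b <= Z.of_nat n)%Z.
Proof.
  unfold shell. rewrite in_app_iff, !in_map_iff. split.
  - intros [[b' [E Hb]] | [b' [E Hb]]]; injection E as <- <-; apply in_zinterval in Hb; lia.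
  - intros [[-> | ->] Hb]; [left | right]; exists b; split; auto; apply in_zinterval; lia.
Qed.

Lemma NoDup_shell n : NoDup (shell n).
Proof.
  unfold shell. apply NoDup_app.
  - apply NoDup_map_injective; [intros x y E; injection E; auto | apply NoDup_zinterval].
  - apply NoDup_map_injective; [intros x y E; injection E; auto | apply NoDup_zinterval].
  - intros [a b] H1 H2. apply in_map_iff in H1 as [x [E1 _]]. apply in_map_iff in H2 as [y [E2 _]].
    injection E1 as <- _. injection E2 as E2 _. lia.
Qed.

Lemma NoDup_flat_map {A B} (f : A -> list B) l :
  NoDup l -> (forall x, In x l -> NoDup (f x)) ->
  (forall x y z, In x l -> In y l -> x <> y -> In z (f x) -> In z (f y) -> False) ->
  NoDup (flat_map f l).
Proof.
  induction l as [| a l IH]; simpl; intros Hl Hf Hd; [constructor |].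
  inversion Hl as [| ? ? Ha Hl']; subst. apply NoDup_app.
  - apply Hf; left; auto.
  - apply IH; auto. intros x y z Hx Hy. apply Hd; right; auto.
  - intros z Hz Hz'. apply in_flat_map in Hz' as [y [Hy Hzy]].
    apply (Hd a y z); auto. intros ->; contradiction.
Qed.

Lemma NoDup_shells N : NoDup (shells N).
Proof.
  apply NoDup_flat_map; [apply seq_NoDup | intros; apply NoDup_shell |].
  intros x y [a b] _ _ Hxy H1 H2. apply in_shell in H1. apply in_shell in H2. lia.
Qed.

Lemma sum_upto_H_term tau N : sum_upto (H_term tau) N = lsum (H_cone_term tau) (shells N).
Proof.
  unfold sum_upto, shells. rewrite sum_n_lsum, lsum_flat_map.
  apply lsum_ext_in. intros; apply H_term_shell.
Qed.

Lemma in_shells N a b : cone_sign (a, b) <> 0 -> (Z.abs a <= Z.of_nat N)%Z -> In (a, b) (shells N).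
Proof.
  intros Hs HN. unfold cone_sign in Hs; cbn [fst snd] in Hs. unfold shells. apply in_flat_map.
  destruct (Z.leb_spec (Z.abs b) a).
  - exists (Z.to_nat a). rewrite in_seq, in_shell. lia.
  - destruct (Z.leb_spec a (- Z.abs b - 1)); [| lra].
    exists (Z.to_nat (- a - 1)). rewrite in_seq, in_shell. lia.
Qed.

Lemma has_sum_nat_H_term tau s : has_usum (H_cone_term tau) s -> has_sum_nat (H_term tau) s.
Proof.
  intros H. unfold has_sum_nat. apply (proj2 (@filterlim_locally_ball_norm _ _ C_NormedModule _ _ _ _)).
  intros eps. destruct (has_usum_support zpair_eq_dec _ _ H (eps / 2)) as [L0 HL0];
    [destruct eps; simpl; lra |].
  exists (zsup L0). intros N HN. unfold ball_norm. rewrite sum_upto_H_term.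
  eapply Rle_lt_trans; [apply HL0; [apply NoDup_shells |] | destruct eps; simpl; lra].
  intros [a b] Hx Hne. apply in_shells.
  - intros Hs. apply Hne. unfold H_cone_term. cbn [fst snd]. rewrite Hs, Rmult_0_l. ring.
  - apply (incl_zsquare_zsup L0 N HN), in_zsquare in Hx. lia.
Qed.

(** * Absolute convergence *)

Lemma Z_abs_le_square k : (Z.abs k <= k * k)%Z.
Proof. destruct (Z.abs_spec k) as [[? ->] | [? ->]]; nia. Qed.

Lemma Cmod_Hminus_term_le tau e n r : 0 < Im tau -> (e = 0 \/ e = 1)%Z ->
  Cmod (Hminus_term tau (IZR e) n r)
  <= sqrt PI * exp (PI * Im tau) * exp (- (PI * Im tau)) ^ Z.abs_nat n * exp (- (PI * Im tau)) ^ Z.abs_nat r.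
Proof.
  intros Hv He. pose proof sqrt_PI_pos. pose proof PI_RGT_0.
  assert (Hpv : 0 < PI * Im tau) by nra.
  set (d := 2 * IZR r + IZR e + 1 / 3). set (k := 2 * IZR n + IZR e + 1).
  assert (Hd : d <> 0).
  { replace d with (IZR (2 * r + e) + 1 / 3) by (unfold d; rewrite plus_IZR, mult_IZR; ring).
    apply IZR_add_third_neq_0. }
  assert (Hr : IZR (Z.abs r) <= 3 * d ^ 2).
  { assert (Hz : (3 * Z.abs r <= (6 * r + 3 * e + 1) * (6 * r + 3 * e + 1))%Z)
      by (pose proof (Z_abs_le_square (6 * r + 3 * e + 1)); lia).
    apply IZR_le in Hz. rewrite !mult_IZR, !plus_IZR, !mult_IZR in Hz. unfold d. nra. }
  assert (Hn : IZR (Z.abs n) - 1 <= k ^ 2).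
  { assert (Hz : (Z.abs n - 1 <= (2 * n + e + 1) * (2 * n + e + 1))%Z)
      by (pose proof (Z_abs_le_square (2 * n + e + 1)); lia).
    apply IZR_le in Hz. rewrite minus_IZR, !mult_IZR, !plus_IZR, !mult_IZR in Hz. unfold k. nra. }
  destruct (inc_gamma_half_bounds (6 * PI * d ^ 2 * Im tau)) as [G0 G1].
  { apply Rmult_lt_0_compat; [| exact Hv]. apply Rmult_lt_0_compat; [lra | apply pow2_gt_0, Hd]. }
  unfold Hminus_term. fold d k.
  rewrite Cmod_RtoC_mult, Cmod_qpow, Rabs_mult, (Rabs_right (inc_gamma _ _)), !exp_neg_pow_abs by lra.
  pose proof (Rabs_sgn_le_1 d). pose proof (Rabs_pos (sgn d)).
  apply Rle_trans with (sqrt PI * exp (- (6 * PI * d ^ 2 * Im tau)) * exp (- (2 * PI * (- 3 / 2 * d ^ 2 + 1 / 2 * k ^ 2) * Im tau))).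
  { apply Rmult_le_compat_r; [apply Rlt_le, exp_pos | nra]. }
  rewrite !Rmult_assoc. apply Rmult_le_compat_l; [lra |].
  rewrite <- !exp_plus. apply exp_le_exp_of_le. nra.
Qed.

Lemma Cmod_H_cone_term_le tau a b : 0 < Im tau ->
  Cmod (H_cone_term tau (a, b)) <= 1 * exp (- (2 * PI * Im tau)) ^ Z.abs_nat a * exp (- (2 * PI * Im tau)) ^ Z.abs_nat b.
Proof.
  intros Hv. pose proof PI_RGT_0. assert (Hpv : 0 < 2 * PI * Im tau) by nra.
  unfold H_cone_term. cbn [fst snd].
  rewrite Cmod_RtoC_mult, Cmod_qpow, Rabs_mult, Rabs_alt, !exp_neg_pow_abs, Rmult_1_r, Rmult_1_l, <- exp_plus.
  unfold cone_sign; cbn [fst snd].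
  destruct (Z.leb_spec (Z.abs b) a); [| destruct (Z.leb_spec a (- Z.abs b - 1))].
  3: { rewrite Rabs_R0, Rmult_0_l. apply Rlt_le, exp_pos. }
  all: rewrite ?Rabs_R1, ?Rabs_m1, Rmult_1_l; apply exp_le_exp_of_le.
  all: assert (Hz : (Z.abs a + Z.abs b <= 3 * a * a + 2 * a - b * b)%Z) by nia.
  all: apply IZR_le in Hz; rewrite plus_IZR, minus_IZR, plus_IZR, !mult_IZR in Hz.
  all: nra.
Qed.

Lemma exp_neg_range x : 0 < x -> 0 <= exp (- x) < 1.
Proof. intros. split; [apply Rlt_le, exp_pos | rewrite <- exp_0; apply exp_increasing; lra]. Qed.

Lemma has_usum_Hminus_term tau e : 0 < Im tau -> (e = 0 \/ e = 1)%Z ->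
  exists s, has_usum (fun u => Hminus_term tau (IZR e) (fst u) (snd u)) s.
Proof.
  intros Hv He. pose proof PI_RGT_0. pose proof sqrt_PI_pos.
  apply has_usum_of_abs_tail_small.
  apply (abs_tail_small_of_geometric_bound (exp (- (PI * Im tau)))
           ltac:(apply exp_neg_range; nra) _ (sqrt PI * exp (PI * Im tau))).
  - apply Rmult_le_pos; [lra | apply Rlt_le, exp_pos].
  - intros n r. apply Cmod_Hminus_term_le; assumption.
Qed.

Lemma has_usum_H_cone_term tau : 0 < Im tau -> exists s, has_usum (H_cone_term tau) s.
Proof.
  intros Hv. pose proof PI_RGT_0.
  apply has_usum_of_abs_tail_small.
  apply (abs_tail_small_of_geometric_bound (exp (- (2 * PI * Im tau))) ltac:(apply exp_neg_range; nra) _ 1);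
    [lra |].
  intros a b. apply Cmod_H_cone_term_le, Hv.
Qed.

Lemma has_usum_theta_term tau Hq Hm0 Hm1 : 0 < Im tau ->
  has_usum (H_cone_term tau) Hq ->
  has_usum (fun u => Hminus_term tau 0 (fst u) (snd u)) Hm0 ->
  has_usum (fun u => Hminus_term tau 1 (fst u) (snd u)) Hm1 ->
  has_usum (fun m => theta_term tau (fst m) (snd m))
    (Cplus (Cplus (Cmult (Cmult (Cmult (RtoC 2) zeta6) (qpow tau (1 / 3))) Hq)
                  (Cmult gamma_const (Cminus Hm0 Hm1)))
           (Cmult gamma_const (Cminus Hm0 Hm1))).
Proof.
  intros Hv HHq HHm0 HHm1.
  apply (has_usum_ext (fun m => Cplus (Cplus (theta_sign_part tau m) (theta_gamma_part tau m))
                                        (theta_gamma_part tau (zreflect m)))).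
  { intros [m1 m2]. symmetry. apply theta_term_split, Hv. }
  apply has_usum_plus; [apply has_usum_plus |].
  - apply (has_usum_ext (fun m => Cmult (Cmult (Cmult (RtoC 2) zeta6) (qpow tau (1 / 3))) (H_cone_term tau m))).
    { intros m. symmetry. apply theta_sign_part_eq. }
    apply has_usum_scal, HHq.
  - apply has_usum_theta_gamma_part; assumption.
  - apply has_usum_zreflect, has_usum_theta_gamma_part; assumption.
Qed.

Theorem proposition3p1 :
  forall tau : C, 0 < Im tau ->
  exists (Hq Hm0 Hm1 Th : C),
    has_sum_nat (H_term tau) Hq /\
    has_sum_Z2 (Hminus_term tau 0) Hm0 /\
    has_sum_Z2 (Hminus_term tau 1) Hm1 /\
    has_sum_Z2 (theta_term tau) Th /\
    Cplus (Cmult (qpow tau (1/3)) Hq)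
          (Cmult (RtoC (- / sqrt PI)) (Cminus Hm0 Hm1))
    = Cmult (Cdiv (cexp (Cmult Ci (RtoC (- PI / 3)))) 2) Th.
Proof.
  intros tau Hv.
  destruct (has_usum_H_cone_term tau Hv) as [Hq HHq].
  destruct (has_usum_Hminus_term tau 0 Hv (or_introl eq_refl)) as [Hm0 HHm0].
  destruct (has_usum_Hminus_term tau 1 Hv (or_intror eq_refl)) as [Hm1 HHm1].
  pose proof (has_usum_theta_term tau Hq Hm0 Hm1 Hv HHq HHm0 HHm1) as Htheta.
  eexists Hq, Hm0, Hm1, _.
  split; [apply has_sum_nat_H_term, HHq |].
  split; [apply (has_sum_Z2_of_has_usum _ _ HHm0) |].
  split; [apply (has_sum_Z2_of_has_usum _ _ HHm1) |].
  split; [apply (has_sum_Z2_of_has_usum _ _ Htheta) |].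
  assert (Hzeta : Cmult (cexp (Cmult Ci (RtoC (- PI / 3)))) zeta6 = RtoC 1).
  { unfold zeta6. rewrite <- cexp_add, <- Cmult_plus_distr_l, <- RtoC_plus.
    replace (- PI / 3 + PI / 3) with 0 by field. rewrite Cmult_0_r. apply cexp_0. }
  unfold gamma_const, Cdiv.
  match goal with |- ?L = _ => transitivity (Cmult (Cmult (cexp (Cmult Ci (RtoC (- PI / 3)))) zeta6) L) end;
    [rewrite Hzeta; ring | field].
Qed.
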